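(* Let $G$ be a group with a finite restricted triangular presentation $\langle S\mid R\rangle$, and let $L=\mathrm{Lk}(v[e],Flag(G,S))$. Then every embedded cycle of length $5$ in $L$ has a diagonal.
   Context: Let $G$ be a group, $S\subset G$ a finite generating set with $S\cap S^{-1}=\emptyset$. The Cayley graph $\Gamma(G,S)$ has vertices $v[g]$, $g\in G$, and a directed edge from $v[g]$ to $v[gs]$ for each $g\in G,s\in S$; $Flag(G,S)$ is its flag complex (a simplex for every finite set of pairwise adjacent vertices). A presentation $\langle S\mid R\rangle$ of $G$ is a restricted triangular presentation if: $S\cap S^{-1}=\emptyset$; $R=\{a\cdot b\cdot c^{-1}\mid a,b,c\in S,\ abc^{-1}=e\text{ in }G\}$ and $\langle S\mid R\rangle$ presents $G$; there are no $a,b,c\in S$ with $abc=e$ in $G$; and for $a,b,c\in S$, $abc\in S$ implies $ab\in S$ and $bc\in S$. The link of a simplex $\sigma$ in $X$ is $\mathrm{Lk}(\sigma,X)=\{\tau\in X\mid \tau\cap\sigma=\emptyset,\ \tau\cup\sigma\in X\}$. Concretely, $L$ has vertices $v[s]$, $s\in S\cup S^{-1}$, and an edge, oriented from $v[g]$ to $v[ga]$, whenever $g, ga\in S\cup S^{-1}$ with $a\in S$. An embedded cycle is an injective simplicial image of a triangulated circle; its length is its number of edges; a diagonal is an edge joining two nonconsecutive vertices of the cycle. *)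

From Stdlib Require Import List Arith.
Import ListNotations.

Record Group := {
  carrier :> Type;
  gmul : carrier -> carrier -> carrier;
  ginv : carrier -> carrier;
  gone : carrier;
  gmul_assoc : forall x y z, gmul x (gmul y z) = gmul (gmul x y) z;
  gmul_1l : forall x, gmul gone x = x;
  gmul_Vl : forall x, gmul (ginv x) x = gone
}.

Arguments gmul {g}.
Arguments ginv {g}.
Arguments gone {g}.

Definition is_hom (G H : Group) (phi : G -> H) : Prop :=
  forall x y : G, phi (gmul x y) = gmul (phi x) (phi y).

(* The finite set S is represented by a list of elements of G (membership
   via [In]). *)

(* <S | R> presents G, where R = { a b c^{-1} | a,b,c in S, a b c^{-1} = e in G },
   stated via the universal property of the presented group (with the
   generators sent to themselves): every assignment of the generators in a
   group H satisfying all relators of R extends uniquely to a homomorphism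
   G -> H. *)
Definition presents_triangular (G : Group) (S : list G) : Prop :=
  forall (H : Group) (f : G -> H),
    (forall a b c, In a S -> In b S -> In c S ->
       gmul (gmul a b) (ginv c) = gone ->
       gmul (gmul (f a) (f b)) (ginv (f c)) = gone) ->
    exists phi : G -> H,
      is_hom G H phi /\ (forall s, In s S -> phi s = f s) /\
      (forall psi : G -> H, is_hom G H psi ->
         (forall s, In s S -> psi s = f s) -> forall x, psi x = phi x).

Definition restricted_triangular (G : Group) (S : list G) : Prop :=
  (forall a b, In a S -> In b S -> a <> ginv b) /\
  presents_triangular G S /\
  (forall a b c, In a S -> In b S -> In c S -> gmul (gmul a b) c <> gone) /\
  (forall a b c, In a S -> In b S -> In c S -> In (gmul (gmul a b) c) S ->
     In (gmul a b) S /\ In (gmul b c) S).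

(* Vertices of L = Lk(v[e], Flag(G,S)): v[s] for s in S cup S^{-1}. *)
Definition link_vertex (G : Group) (S : list G) (g : G) : Prop :=
  exists s, In s S /\ (g = s \/ g = ginv s).

(* Edges of L: {v[g], v[g a]} with g, g a in S cup S^{-1} and a in S
   (considered as undirected edges). *)
Definition link_edge (G : Group) (S : list G) (g h : G) : Prop :=
  link_vertex G S g /\ link_vertex G S h /\
  exists a, In a S /\ (h = gmul g a \/ g = gmul h a).

Definition embedded_cycle (G : Group) (S : list G) (n : nat) (c : nat -> G) : Prop :=
  3 <= n /\
  (forall i, i < n -> link_vertex G S (c i)) /\
  (forall i j, i < n -> j < n -> c i = c j -> i = j) /\
  (forall i, i < n -> link_edge G S (c i) (c ((i + 1) mod n))).

Definition has_diagonal (G : Group) (S : list G) (n : nat) (c : nat -> G) : Prop :=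
  exists i j, i < n /\ j < n /\ i <> j /\
    j <> (i + 1) mod n /\ i <> (j + 1) mod n /\
    link_edge G S (c i) (c j).

From Stdlib Require Import List Arith Lia Btauto Classical.

(* Write x -> y when y = x a for some a in S.  Two vertices of
   the link L are adjacent exactly when they are related by -> in some
   direction, and the cone point e is adjacent to every vertex of L.  The
   condition "abc in S implies ab, bc in S" gives the square rule: if
   x -> y -> z -> w and x -> w, then x -> z and y -> w.

   Suppose a 5-cycle c0 ... c4 of L had no diagonal.  Orient each cycle edge
   and each spoke {e, ci}.  At every cycle vertex q = ci, with neighbours
   p = c(i-1) and r = c(i+1), the square rule (applied inside the four
   vertices e, p, q, r, where p and r are not adjacent) forces: the cycle
   passes straight through q iff the spokes at p and r are oriented
   differently.  Adding these five parity relations modulo 2, every edge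
   and every spoke orientation appears twice, so the sum is 0, while the
   right-hand sides sum to 5, which is odd: a contradiction. *)

Section SquareRule.

Variable T : Type.
Variable R : T -> T -> Prop.

Hypothesis square : forall x y z w,
  R x y -> R y z -> R z w -> R x w -> R x z /\ R y w.

Definition adjacent (x y : T) : Prop := R x y \/ R y x.

Definition oriented (b : bool) (x y : T) : Prop := if b then R x y else R y x.

Lemma adjacent_oriented (x y : T) : adjacent x y -> exists b, oriented b x y.
Proof. intros [H | H]; [exists true | exists false]; exact H. Qed.

Lemma fan_parity (h p q r : T) (tp tr dpq dqr : bool) :
  ~ adjacent p r ->
  oriented tp h p -> oriented tr h r ->
  oriented dpq p q -> oriented dqr q r ->
  xorb (xorb dpq dqr) (xorb tp tr) = true.
Proof.
  unfold adjacent.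
  intros Hpr Hp Hr Hpq Hqr.
  destruct dpq, dqr, tp, tr; cbn in *; try reflexivity; exfalso; apply Hpr.
  - destruct (square h p q r); tauto.
  - destruct (square p q r h); tauto.
  - destruct (square r h p q); tauto.
  - destruct (square p h r q); tauto.
  - destruct (square q r h p); tauto.
  - destruct (square q p h r); tauto.
  - destruct (square h r q p); tauto.
  - destruct (square r q p h); tauto.
Qed.

(* In a wheel with hub h and rim c0 ... c4, some chord of the rim is an
   edge: summing [fan_parity] over the five rim vertices gives 0 = 1. *)
Lemma wheel5_chord (h c0 c1 c2 c3 c4 : T) :
  adjacent h c0 -> adjacent h c1 -> adjacent h c2 ->
  adjacent h c3 -> adjacent h c4 ->
  adjacent c0 c1 -> adjacent c1 c2 -> adjacent c2 c3 ->
  adjacent c3 c4 -> adjacent c4 c0 ->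
  adjacent c0 c2 \/ adjacent c1 c3 \/ adjacent c2 c4 \/
  adjacent c3 c0 \/ adjacent c4 c1.
Proof.
  intros S0 S1 S2 S3 S4 E0 E1 E2 E3 E4.
  apply NNPP; intro Hno.
  apply not_or_and in Hno as [N02 Hno].
  apply not_or_and in Hno as [N13 Hno].
  apply not_or_and in Hno as [N24 Hno].
  apply not_or_and in Hno as [N30 N41].
  destruct (adjacent_oriented _ _ S0) as [t0 O0],
    (adjacent_oriented _ _ S1) as [t1 O1], (adjacent_oriented _ _ S2) as [t2 O2],
    (adjacent_oriented _ _ S3) as [t3 O3], (adjacent_oriented _ _ S4) as [t4 O4].
  destruct (adjacent_oriented _ _ E0) as [d0 D0],
    (adjacent_oriented _ _ E1) as [d1 D1], (adjacent_oriented _ _ E2) as [d2 D2],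
    (adjacent_oriented _ _ E3) as [d3 D3], (adjacent_oriented _ _ E4) as [d4 D4].
  pose proof (fan_parity h c0 c1 c2 t0 t2 d0 d1 N02 O0 O2 D0 D1) as F1.
  pose proof (fan_parity h c1 c2 c3 t1 t3 d1 d2 N13 O1 O3 D1 D2) as F2.
  pose proof (fan_parity h c2 c3 c4 t2 t4 d2 d3 N24 O2 O4 D2 D3) as F3.
  pose proof (fan_parity h c3 c4 c0 t3 t0 d3 d4 N30 O3 O0 D3 D4) as F4.
  pose proof (fan_parity h c4 c0 c1 t4 t1 d4 d0 N41 O4 O1 D4 D0) as F0.
  assert (Hsum : xorb (xorb d0 d1) (xorb t0 t2)
               = xorb (xorb (xorb (xorb d1 d2) (xorb t1 t3))
                            (xorb (xorb d2 d3) (xorb t2 t4)))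
                      (xorb (xorb (xorb d3 d4) (xorb t3 t0))
                            (xorb (xorb d4 d0) (xorb t4 t1)))) by btauto.
  rewrite F1, F2, F3, F4, F0 in Hsum.
  discriminate.
Qed.

End SquareRule.

Arguments adjacent {T} R x y.

Section RightMultiplication.

Variable G : Group.
Variable S : list G.

Lemma gmul_cancel_l (a x y : G) : gmul a x = gmul a y -> x = y.
Proof.
  intro H.
  rewrite <- (gmul_1l G x), <- (gmul_1l G y), <- (gmul_Vl G a),
    <- !gmul_assoc, H.
  reflexivity.
Qed.

Definition arrow (x y : G) : Prop := exists a, In a S /\ y = gmul x a.

(* The square rule for ->: if x -> w equals x -> y -> z -> w, the generator
   of x -> w is a product abc in S, hence ab and bc lie in S. *)
Lemma arrow_square :
  (forall a b c, In a S -> In b S -> In c S -> In (gmul (gmul a b) c) S ->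
     In (gmul a b) S /\ In (gmul b c) S) ->
  forall x y z w, arrow x y -> arrow y z -> arrow z w -> arrow x w ->
  arrow x z /\ arrow y w.
Proof.
  intros Hclosed x y z w [a [Ha Ey]] [b [Hb Ez]] [c [Hc Ew]] [d [Hd Ew']].
  assert (Hd_abc : d = gmul (gmul a b) c).
  { apply (gmul_cancel_l x). rewrite <- Ew', Ew, Ez, Ey, !gmul_assoc.
    reflexivity. }
  subst d.
  destruct (Hclosed a b c Ha Hb Hc Hd) as [Hab Hbc].
  split.
  - exists (gmul a b). split; [exact Hab |].
    rewrite Ez, Ey, gmul_assoc. reflexivity.
  - exists (gmul b c). split; [exact Hbc |].
    rewrite Ew, Ez, gmul_assoc. reflexivity.
Qed.

Lemma link_vertex_spoke (g : G) :
  link_vertex G S g -> adjacent arrow gone g.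
Proof.
  intros [s [Hs [E | E]]].
  - left. exists s. split; [exact Hs |]. rewrite gmul_1l. exact E.
  - right. exists s. split; [exact Hs |]. rewrite E, gmul_Vl. reflexivity.
Qed.

Lemma link_edge_adjacent (g h : G) :
  link_edge G S g h -> adjacent arrow g h.
Proof.
  intros [_ [_ [a [Ha [E | E]]]]]; [left | right]; exists a; auto.
Qed.

Lemma adjacent_link_edge (g h : G) :
  link_vertex G S g -> link_vertex G S h -> adjacent arrow g h ->
  link_edge G S g h.
Proof.
  intros Hg Hh [[a [Ha E]] | [a [Ha E]]]; repeat split; auto;
    exists a; auto.
Qed.

Lemma diagonal_of_adjacent (n : nat) (c : nat -> G) (i j : nat) :
  (forall k, k < n -> link_vertex G S (c k)) ->
  i < n -> j < n -> i <> j -> j <> (i + 1) mod n -> i <> (j + 1) mod n ->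
  adjacent arrow (c i) (c j) -> has_diagonal G S n c.
Proof.
  intros Hv Hi Hj Hij Hnext Hprev Hadj.
  exists i, j. repeat split; auto.
  apply adjacent_link_edge; auto.
Qed.

End RightMultiplication.

Theorem mainTheorem3 (G : Group) (S : list G) :
  restricted_triangular G S ->
  forall c : nat -> G, embedded_cycle G S 5 c -> has_diagonal G S 5 c.
Proof.
  intros [_ [_ [_ Hclosed]]] c [_ [Hv [_ He]]].
  pose proof (arrow_square G S Hclosed) as Hsquare.
  assert (Spoke : forall i, i < 5 -> adjacent (arrow G S) gone (c i))
    by (intros; apply link_vertex_spoke, Hv; assumption).
  assert (Edge : forall i, i < 5 ->
            adjacent (arrow G S) (c i) (c ((i + 1) mod 5)))
    by (intros; apply link_edge_adjacent, He; assumption).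
  destruct (wheel5_chord G (arrow G S) Hsquare gone (c 0) (c 1) (c 2) (c 3) (c 4)
              (Spoke 0 ltac:(lia)) (Spoke 1 ltac:(lia)) (Spoke 2 ltac:(lia))
              (Spoke 3 ltac:(lia)) (Spoke 4 ltac:(lia))
              (Edge 0 ltac:(lia)) (Edge 1 ltac:(lia)) (Edge 2 ltac:(lia))
              (Edge 3 ltac:(lia)) (Edge 4 ltac:(lia)))
    as [C | [C | [C | [C | C]]]].
  - apply (diagonal_of_adjacent G S 5 c 0 2); auto; cbn; lia.
  - apply (diagonal_of_adjacent G S 5 c 1 3); auto; cbn; lia.
  - apply (diagonal_of_adjacent G S 5 c 2 4); auto; cbn; lia.
  - apply (diagonal_of_adjacent G S 5 c 3 0); auto; cbn; lia.
  - apply (diagonal_of_adjacent G S 5 c 4 1); auto; cbn; lia.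
Qed.
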